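(* Let $P,Q\in\Gamma_n$ and $0<r\le R$ with $r\le p_i/q_i\le R$ for all $i$. Let $s,t\in\mathbb{R}$ with $0\le s\le4$. If $t\ge s$ and $t(4-s)\ge6s-s^2-4$, then $$\Big(\frac{r+1}{2r}\Big)^{s-t-1}\frac{(4-s)r+s}{r}\,\Omega_t(P\|Q)\le\zeta_s(Q\|P)\le\Big(\frac{R+1}{2R}\Big)^{s-t-1}\frac{(4-s)R+s}{R}\,\Omega_t(P\|Q).$$ If $t\le s$ and $t(4-s)\le6s-s^2-4$, then $$\Big(\frac{R+1}{2R}\Big)^{s-t-1}\frac{(4-s)R+s}{R}\,\Omega_t(P\|Q)\le\zeta_s(Q\|P)\le\Big(\frac{r+1}{2r}\Big)^{s-t-1}\frac{(4-s)r+s}{r}\,\Omega_t(P\|Q).$$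
   Context: $\Gamma_n=\{P=(p_1,\dots,p_n): p_i>0,\ \sum_i p_i=1\}$, $n\ge2$. For $P,Q\in\Gamma_n$ and $s\in\mathbb{R}$: $\Omega_s(P\|Q)=[s(s-1)]^{-1}\big[\sum_i p_i\big(\frac{p_i+q_i}{2p_i}\big)^s-1\big]$ for $s\ne0,1$; $\Omega_0(P\|Q)=\sum_i p_i\ln\frac{2p_i}{p_i+q_i}$; $\Omega_1(P\|Q)=\sum_i\frac{p_i+q_i}{2}\ln\frac{p_i+q_i}{2p_i}$. $\zeta_s(Q\|P)=(s-1)^{-1}\sum_i(q_i-p_i)\big(\frac{p_i+q_i}{2p_i}\big)^{s-1}$ for $s\ne1$; $\zeta_1(Q\|P)=\sum_i(q_i-p_i)\ln\frac{p_i+q_i}{2p_i}$. *)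

(* concrete reals R. Probability vectors of length n are
   functions p : nat -> R, used on indices 0..n-1. *)
From Stdlib Require Import Reals.
Open Scope R_scope.

Definition sumn (n : nat) (f : nat -> R) : R :=
  match n with O => 0 | S m => sum_f_R0 f m end.

Definition in_Gamma (n : nat) (p : nat -> R) : Prop :=
  (forall i, (i < n)%nat -> 0 < p i) /\ sumn n p = 1.

Definition Omega (n : nat) (s : R) (p q : nat -> R) : R :=
  if Req_EM_T s 0 then
    sumn n (fun i => p i * ln (2 * p i / (p i + q i)))
  else if Req_EM_T s 1 then
    sumn n (fun i => (p i + q i) / 2 * ln ((p i + q i) / (2 * p i)))
  else
    / (s * (s - 1)) *
    (sumn n (fun i => p i * Rpower ((p i + q i) / (2 * p i)) s) - 1).

Definition zeta (n : nat) (s : R) (q p : nat -> R) : R :=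
  if Req_EM_T s 1 then
    sumn n (fun i => (q i - p i) * ln ((p i + q i) / (2 * p i)))
  else
    / (s - 1) *
    sumn n (fun i => (q i - p i) * Rpower ((p i + q i) / (2 * p i)) (s - 1)).

From Stdlib Require Import Reals Lra Lia.
From Coquelicot Require Import Coquelicot.
Open Scope R_scope.

(* Omega_t and zeta_s are Csiszar f-divergences sum_i q_i f(p_i/q_i) whose generators
   vanish at 1 and have second derivatives related by zeta_s'' = phi * Omega_t'' with
   Omega_t'' > 0.  If m <= phi <= M on [r, R], the generators of zeta_s - m Omega_t and
   M Omega_t - zeta_s are convex on [r, R] and vanish at 1, so both divergences are
   nonnegative by the tangent-line inequality at 1.  Under either hypothesis on (s, t)
   the numerator of phi' has constant sign, so the best m and M are the values of phi
   at the endpoints r and R. *)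


Lemma nondecreasing_of_derive_nonneg (f f' : R -> R) a b : a <= b ->
  (forall c, a <= c <= b -> is_derive f c (f' c)) ->
  (forall c, a <= c <= b -> 0 <= f' c) -> f a <= f b.
Proof.
intros Hab Hd Hpos. destruct (Req_dec a b) as [<-|Hne]; [lra|].
destruct (MVT_cor2 f f' a b) as [c [Hc1 Hc2]]; [lra| |].
- intros c Hc; apply is_derive_Reals, Hd; auto.
- assert (0 <= f' c) by (apply Hpos; lra). nra.
Qed.

Lemma nonincreasing_of_derive_nonpos (f f' : R -> R) a b : a <= b ->
  (forall c, a <= c <= b -> is_derive f c (f' c)) ->
  (forall c, a <= c <= b -> f' c <= 0) -> f b <= f a.
Proof.
intros Hab Hd Hneg.
enough (- f a <= - f b) by lra.
apply (nondecreasing_of_derive_nonneg (fun x => - f x) (fun x => - f' x)); auto.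
- intros c Hc. apply (is_derive_opp f), Hd, Hc.
- intros c Hc. specialize (Hneg c Hc). lra.
Qed.

Lemma convex_above_tangent (H H1 H2 : R -> R) r RR a x :
  r <= a <= RR -> r <= x <= RR ->
  (forall y, r <= y <= RR -> is_derive H y (H1 y)) ->
  (forall y, r <= y <= RR -> is_derive H1 y (H2 y)) ->
  (forall y, r <= y <= RR -> 0 <= H2 y) -> H a + H1 a * (x - a) <= H x.
Proof.
intros Ha Hx Hd Hd1 Hconv.
assert (H1_mono : forall y z, r <= y -> y <= z -> z <= RR -> H1 y <= H1 z).
{ intros y z Hy Hyz Hz. apply (nondecreasing_of_derive_nonneg H1 H2); auto;
    intros c Hc; [apply Hd1| apply Hconv]; lra. }
assert (Hg : forall y, r <= y <= RR ->
  is_derive (fun z => H z - H1 a * z) y (H1 y - H1 a)).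
{ intros y Hy. replace (H1 y - H1 a) with (minus (H1 y) (H1 a * 1)) by (unfold minus, plus, opp; simpl; ring).
  apply (is_derive_minus H (fun z => H1 a * z)); [apply Hd, Hy|].
  apply is_derive_scal; auto_derive; auto. }
enough (H a - H1 a * a <= H x - H1 a * x) by lra.
destruct (Rle_dec a x).
- apply (nondecreasing_of_derive_nonneg (fun z => H z - H1 a * z) (fun y => H1 y - H1 a)); auto.
  + intros c Hc; apply Hg; lra.
  + intros c Hc. assert (H1 a <= H1 c) by (apply H1_mono; lra). lra.
- apply (nonincreasing_of_derive_nonpos (fun z => H z - H1 a * z) (fun y => H1 y - H1 a)); [lra| |].
  + intros c Hc; apply Hg; lra.
  + intros c Hc. assert (H1 c <= H1 a) by (apply H1_mono; lra). lra.
Qed.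

Lemma sumn_ext n (f g : nat -> R) :
  (forall i, (i < n)%nat -> f i = g i) -> sumn n f = sumn n g.
Proof.
destruct n as [|m]; intros Hfg; [reflexivity|].
apply sum_eq; intros i Hi; apply Hfg; lia.
Qed.

Lemma sumn_le n (f g : nat -> R) :
  (forall i, (i < n)%nat -> f i <= g i) -> sumn n f <= sumn n g.
Proof.
destruct n as [|m]; intros Hfg; [apply Rle_refl|].
apply sum_Rle; intros i Hi; apply Hfg; lia.
Qed.

Lemma sumn_minus n (f g : nat -> R) :
  sumn n (fun i => f i - g i) = sumn n f - sumn n g.
Proof. destruct n as [|m]; [simpl; ring| apply minus_sum]. Qed.

Lemma sumn_scal n c (f : nat -> R) :
  sumn n (fun i => c * f i) = c * sumn n f.
Proof.
destruct n as [|m]; simpl; [ring|].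
rewrite scal_sum. apply sum_eq; intros; ring.
Qed.

Definition csiszar (n : nat) (f : R -> R) (p q : nat -> R) : R :=
  sumn n (fun i => q i * f (p i / q i)).

Section Csiszar.

Variables (n : nat) (p q : nat -> R) (r RR : R).
Hypotheses (Hp : in_Gamma n p) (Hq : in_Gamma n q).
Hypothesis Hratio : forall i, (i < n)%nat -> r <= p i / q i <= RR.

Lemma ratio_bounds_contain_1 : r <= 1 <= RR.
Proof.
destruct Hp as [Hp_pos Hp1], Hq as [Hq_pos Hq1].
assert (Hp_eq : forall i, (i < n)%nat -> p i = q i * (p i / q i)).
{ intros i Hi. specialize (Hq_pos i Hi). field. lra. }
split.
- rewrite <- Hp1, <- (Rmult_1_r r), <- Hq1, <- sumn_scal.
  apply sumn_le; intros i Hi. rewrite (Hp_eq i Hi).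
  specialize (Hratio i Hi); specialize (Hq_pos i Hi). nra.
- rewrite <- Hp1, <- (Rmult_1_r RR), <- Hq1, <- sumn_scal.
  apply sumn_le; intros i Hi. rewrite (Hp_eq i Hi).
  specialize (Hratio i Hi); specialize (Hq_pos i Hi). nra.
Qed.

Lemma csiszar_nonneg (H H1 H2 : R -> R) :
  H 1 = 0 ->
  (forall y, r <= y <= RR -> is_derive H y (H1 y)) ->
  (forall y, r <= y <= RR -> is_derive H1 y (H2 y)) ->
  (forall y, r <= y <= RR -> 0 <= H2 y) ->
  0 <= csiszar n H p q.
Proof.
intros H_1 Hd Hd1 Hconv.
destruct Hp as [_ Hp1], Hq as [Hq_pos Hq1].
assert (H1R := ratio_bounds_contain_1).
(* Jensen via the tangent at 1: the tangent terms sum to H1 1 * (sum p - sum q) = 0. *)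
apply Rle_trans with (sumn n (fun i => H1 1 * (p i - q i))).
- rewrite sumn_scal, sumn_minus, Hp1, Hq1. lra.
- apply sumn_le; intros i Hi.
  assert (Ht := convex_above_tangent H H1 H2 r RR 1 (p i / q i) H1R (Hratio i Hi) Hd Hd1 Hconv).
  specialize (Hq_pos i Hi). rewrite H_1 in Ht.
  replace (H1 1 * (p i - q i)) with (q i * (H1 1 * (p i / q i - 1))) by (field; lra).
  apply Rmult_le_compat_l; lra.
Qed.

Lemma csiszar_le (F F1 F2 G G1 G2 : R -> R) :
  F 1 = G 1 ->
  (forall y, r <= y <= RR -> is_derive F y (F1 y)) ->
  (forall y, r <= y <= RR -> is_derive F1 y (F2 y)) ->
  (forall y, r <= y <= RR -> is_derive G y (G1 y)) ->
  (forall y, r <= y <= RR -> is_derive G1 y (G2 y)) ->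
  (forall y, r <= y <= RR -> F2 y <= G2 y) ->
  csiszar n F p q <= csiszar n G p q.
Proof.
intros HFG HF HF1 HG HG1 H2le.
enough (0 <= csiszar n (fun y => G y - F y) p q).
{ unfold csiszar in *. apply Rminus_le_0. rewrite <- sumn_minus.
  erewrite sumn_ext; [eassumption|]. intros i _; cbv beta; ring. }
apply (csiszar_nonneg _ (fun y => G1 y - F1 y) (fun y => G2 y - F2 y)).
- lra.
- intros y Hy. apply (is_derive_minus G F); auto.
- intros y Hy. apply (is_derive_minus G1 F1); auto.
- intros y Hy. specialize (H2le y Hy). lra.
Qed.

End Csiszar.

Lemma csiszar_scal n c (f : R -> R) (p q : nat -> R) :
  csiszar n (fun x => c * f x) p q = c * csiszar n f p q.
Proof.
unfold csiszar. rewrite <- sumn_scal. apply sumn_ext; intros; ring.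
Qed.

Definition omega_gen (t x : R) : R :=
  if Req_EM_T t 0 then x * ln (2 * x / (x + 1))
  else if Req_EM_T t 1 then (x + 1) / 2 * ln ((x + 1) / (2 * x))
  else / (t * (t - 1)) * (x * Rpower ((x + 1) / (2 * x)) t - x).

Definition zeta_gen (s x : R) : R :=
  if Req_EM_T s 1 then (1 - x) * ln ((x + 1) / (2 * x))
  else / (s - 1) * ((1 - x) * Rpower ((x + 1) / (2 * x)) (s - 1)).

Definition omega_gen'' (t x : R) : R :=
  Rpower ((x + 1) / (2 * x)) t / (x * (x + 1) ^ 2).

Definition zeta_gen'' (s x : R) : R :=
  Rpower ((x + 1) / (2 * x)) (s - 1) * ((4 - s) * x + s) / (x ^ 2 * (x + 1) ^ 2).

Definition phi (s t x : R) : R :=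
  Rpower ((x + 1) / (2 * x)) (s - t - 1) * (((4 - s) * x + s) / x).

Lemma omega_gen_1 t : omega_gen t 1 = 0.
Proof.
unfold omega_gen. replace (2 * 1 / (1 + 1)) with 1 by field.
replace ((1 + 1) / (2 * 1)) with 1 by field.
unfold Rpower. rewrite ln_1, !Rmult_0_r, exp_0.
destruct (Req_EM_T t 0); [|destruct (Req_EM_T t 1)]; ring.
Qed.

Lemma zeta_gen_1 s : zeta_gen s 1 = 0.
Proof. unfold zeta_gen. destruct (Req_EM_T s 1); ring. Qed.

Lemma mean_ratio_eq (a b : R) : 0 < a -> 0 < b ->
  (a / b + 1) / (2 * (a / b)) = (a + b) / (2 * a).
Proof. intros Ha Hb. field. lra. Qed.

Lemma Omega_csiszar n t (p q : nat -> R) :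
  in_Gamma n p -> in_Gamma n q -> Omega n t p q = csiszar n (omega_gen t) p q.
Proof.
intros [Hp_pos Hp1] [Hq_pos _]. unfold Omega, omega_gen, csiszar.
destruct (Req_EM_T t 0); [|destruct (Req_EM_T t 1)].
- apply sumn_ext; intros i Hi. specialize (Hp_pos i Hi); specialize (Hq_pos i Hi).
  replace (2 * (p i / q i) / (p i / q i + 1)) with (2 * p i / (p i + q i)) by (field; lra).
  field; lra.
- apply sumn_ext; intros i Hi. specialize (Hp_pos i Hi); specialize (Hq_pos i Hi).
  rewrite mean_ratio_eq by lra. field; lra.
- rewrite <- Hp1 at 2. rewrite <- sumn_minus, <- sumn_scal.
  apply sumn_ext; intros i Hi. specialize (Hp_pos i Hi); specialize (Hq_pos i Hi).
  rewrite mean_ratio_eq by lra. field; lra.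
Qed.

Lemma zeta_csiszar n s (p q : nat -> R) :
  in_Gamma n p -> in_Gamma n q -> zeta n s q p = csiszar n (zeta_gen s) p q.
Proof.
intros [Hp_pos _] [Hq_pos _]. unfold zeta, zeta_gen, csiszar.
destruct (Req_EM_T s 1); [|rewrite <- sumn_scal];
  apply sumn_ext; intros i Hi; specialize (Hp_pos i Hi); specialize (Hq_pos i Hi);
  rewrite mean_ratio_eq by lra; field; lra.
Qed.

Ltac derive_side_conditions :=
  repeat split; try lra;
  repeat apply Rmult_integral_contrapositive_currified; try lra;
  try (apply pow_nonzero; lra);
  try (apply Rmult_lt_0_compat; [lra| apply Rinv_0_lt_compat; lra]).

Ltac derive_identity :=
  unfold Rdiv; repeat (set (e := exp _); clearbody e);
  field; derive_side_conditions.

Lemma omega_gen_derive2 t : exists F1 : R -> R,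
  (forall x, 0 < x -> is_derive (omega_gen t) x (F1 x)) /\
  (forall x, 0 < x -> is_derive F1 x (omega_gen'' t x)).
Proof.
unfold omega_gen, omega_gen'', Rpower. destruct (Req_EM_T t 0) as [->|Ht0].
- exists (fun x => ln (2 * x / (x + 1)) + 1 / (x + 1)). split; intros x Hx.
  + auto_derive; [derive_side_conditions| derive_identity].
  + rewrite Rmult_0_l, exp_0. auto_derive; [derive_side_conditions| derive_identity].
- destruct (Req_EM_T t 1) as [->|Ht1].
  + exists (fun x => ln ((x + 1) / (2 * x)) / 2 - 1 / (2 * x)). split; intros x Hx.
    * auto_derive; [derive_side_conditions| derive_identity].
    * rewrite Rmult_1_l, exp_ln by (apply Rdiv_lt_0_compat; lra).
      auto_derive; [derive_side_conditions| derive_identity].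
  + assert (t - 1 <> 0) by lra.
    exists (fun x => / (t * (t - 1)) * (exp (t * ln ((x + 1) / (2 * x)))
      - t * exp (t * ln ((x + 1) / (2 * x))) / (x + 1) - 1)).
    split; intros x Hx; auto_derive; [derive_side_conditions| derive_identity|
      derive_side_conditions| derive_identity].
Qed.

Lemma zeta_gen_derive2 s : exists G1 : R -> R,
  (forall x, 0 < x -> is_derive (zeta_gen s) x (G1 x)) /\
  (forall x, 0 < x -> is_derive G1 x (zeta_gen'' s x)).
Proof.
unfold zeta_gen, zeta_gen'', Rpower. destruct (Req_EM_T s 1) as [->|Hs1].
- exists (fun x => - ln ((x + 1) / (2 * x)) - (1 - x) / (x * (x + 1))). split; intros x Hx.
  + auto_derive; [derive_side_conditions| derive_identity].
  + rewrite Rminus_diag, Rmult_0_l, exp_0. auto_derive; [derive_side_conditions| derive_identity].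
- assert (s - 1 <> 0) by lra.
  exists (fun x => - exp ((s - 1) * ln ((x + 1) / (2 * x))) / (s - 1)
     - (1 - x) * exp ((s - 1) * ln ((x + 1) / (2 * x))) / (x * (x + 1))).
  split; intros x Hx; auto_derive; [derive_side_conditions| derive_identity|
    derive_side_conditions| derive_identity].
Qed.

Lemma zeta_gen''_eq s t x : 0 < x -> zeta_gen'' s x = phi s t x * omega_gen'' t x.
Proof.
intros Hx. unfold zeta_gen'', omega_gen'', phi.
replace (s - 1) with ((s - t - 1) + t) by ring. rewrite Rpower_plus.
field. lra.
Qed.

Lemma omega_gen''_pos t x : 0 < x -> 0 < omega_gen'' t x.
Proof.
intros Hx. apply Rdiv_lt_0_compat; [apply exp_pos|].
apply Rmult_lt_0_compat; [|apply pow_lt]; lra.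
Qed.

Section Comparison.

Variables (n : nat) (p q : nat -> R) (r RR s t m : R).
Hypotheses (Hp : in_Gamma n p) (Hq : in_Gamma n q) (Hr : 0 < r).
Hypothesis Hratio : forall i, (i < n)%nat -> r <= p i / q i <= RR.

Lemma Omega_le_zeta_of_phi_lower :
  (forall y, r <= y <= RR -> m <= phi s t y) -> m * Omega n t p q <= zeta n s q p.
Proof.
intros Hm. rewrite Omega_csiszar, zeta_csiszar, <- csiszar_scal by assumption.
destruct (omega_gen_derive2 t) as [F1 [HF HF1]], (zeta_gen_derive2 s) as [G1 [HG HG1]].
apply (csiszar_le n p q r RR Hp Hq Hratio _ (fun y => m * F1 y) (fun y => m * omega_gen'' t y)
  _ G1 (zeta_gen'' s)).
- rewrite omega_gen_1, zeta_gen_1. ring.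
- intros y Hy. apply is_derive_scal, HF. lra.
- intros y Hy. apply is_derive_scal, HF1. lra.
- intros y Hy. apply HG. lra.
- intros y Hy. apply HG1. lra.
- intros y Hy. rewrite (zeta_gen''_eq s t) by lra. apply Rmult_le_compat_r.
  + apply Rlt_le, omega_gen''_pos. lra.
  + apply Hm, Hy.
Qed.

Lemma zeta_le_Omega_of_phi_upper :
  (forall y, r <= y <= RR -> phi s t y <= m) -> zeta n s q p <= m * Omega n t p q.
Proof.
intros Hm. rewrite Omega_csiszar, zeta_csiszar, <- csiszar_scal by assumption.
destruct (omega_gen_derive2 t) as [F1 [HF HF1]], (zeta_gen_derive2 s) as [G1 [HG HG1]].
apply (csiszar_le n p q r RR Hp Hq Hratio _ G1 (zeta_gen'' s)
  _ (fun y => m * F1 y) (fun y => m * omega_gen'' t y)).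
- rewrite omega_gen_1, zeta_gen_1. ring.
- intros y Hy. apply HG. lra.
- intros y Hy. apply HG1. lra.
- intros y Hy. apply is_derive_scal, HF. lra.
- intros y Hy. apply is_derive_scal, HF1. lra.
- intros y Hy. rewrite (zeta_gen''_eq s t) by lra. apply Rmult_le_compat_r.
  + apply Rlt_le, omega_gen''_pos. lra.
  + apply Hm, Hy.
Qed.

End Comparison.

(* The numerator is linear in x, with slope and intercept signed by the two
   hypotheses on (s, t). *)
Lemma phi_derive s t x : 0 < x ->
  is_derive (phi s t) x (Rpower ((x + 1) / (2 * x)) (s - t - 1)
    * (x * (t * (4 - s) - (6 * s - s ^ 2 - 4)) + s * (t - s)) / (x ^ 2 * (x + 1))).
Proof. intros Hx. unfold phi, Rpower. auto_derive; [derive_side_conditions| derive_identity]. Qed.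

Lemma phi_nondecreasing s t a b : 0 <= s -> t >= s -> t * (4 - s) >= 6 * s - s ^ 2 - 4 ->
  0 < a -> a <= b -> phi s t a <= phi s t b.
Proof.
intros Hs Ht Hc Ha Hab.
eapply (nondecreasing_of_derive_nonneg (phi s t) _ a b Hab); [intros y Hy; apply phi_derive; lra|].
intros y Hy. apply Rmult_le_pos.
- apply Rmult_le_pos; [apply Rlt_le, exp_pos|].
  apply Rplus_le_le_0_compat; apply Rmult_le_pos; lra.
- apply Rlt_le, Rinv_0_lt_compat, Rmult_lt_0_compat; [apply pow_lt|]; lra.
Qed.

Lemma phi_nonincreasing s t a b : 0 <= s -> t <= s -> t * (4 - s) <= 6 * s - s ^ 2 - 4 ->
  0 < a -> a <= b -> phi s t b <= phi s t a.
Proof.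
intros Hs Ht Hc Ha Hab.
eapply (nonincreasing_of_derive_nonpos (phi s t) _ a b Hab); [intros y Hy; apply phi_derive; lra|].
intros y Hy. apply Rmult_le_0_r.
- apply Rmult_le_0_l; [apply Rlt_le, exp_pos|].
  assert (0 <= y * (6 * s - s ^ 2 - 4 - t * (4 - s))) by (apply Rmult_le_pos; lra).
  assert (0 <= s * (s - t)) by (apply Rmult_le_pos; lra). lra.
- apply Rlt_le, Rinv_0_lt_compat, Rmult_lt_0_compat; [apply pow_lt|]; lra.
Qed.
Theorem theorem4p1 (n : nat) (p q : nat -> R) (r RR s t : R) :
  (2 <= n)%nat ->
  in_Gamma n p -> in_Gamma n q ->
  0 < r -> r <= RR ->
  (forall i, (i < n)%nat -> r <= p i / q i <= RR) ->
  0 <= s <= 4 ->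
  ((t >= s -> t * (4 - s) >= 6 * s - s ^ 2 - 4 ->
     Rpower ((r + 1) / (2 * r)) (s - t - 1) * (((4 - s) * r + s) / r) * Omega n t p q
       <= zeta n s q p
     /\ zeta n s q p
       <= Rpower ((RR + 1) / (2 * RR)) (s - t - 1) * (((4 - s) * RR + s) / RR) * Omega n t p q)
  /\
   (t <= s -> t * (4 - s) <= 6 * s - s ^ 2 - 4 ->
     Rpower ((RR + 1) / (2 * RR)) (s - t - 1) * (((4 - s) * RR + s) / RR) * Omega n t p q
       <= zeta n s q p
     /\ zeta n s q p
       <= Rpower ((r + 1) / (2 * r)) (s - t - 1) * (((4 - s) * r + s) / r) * Omega n t p q)).
Proof.
intros _ Hp Hq Hr _ Hratio [Hs0 _].
change (Rpower ((r + 1) / (2 * r)) (s - t - 1) * (((4 - s) * r + s) / r)) with (phi s t r).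
change (Rpower ((RR + 1) / (2 * RR)) (s - t - 1) * (((4 - s) * RR + s) / RR)) with (phi s t RR).
split; intros Ht Hc; split.
- apply (Omega_le_zeta_of_phi_lower n p q r RR); auto.
  intros y Hy. apply phi_nondecreasing; lra.
- apply (zeta_le_Omega_of_phi_upper n p q r RR); auto.
  intros y Hy. apply phi_nondecreasing; lra.
- apply (Omega_le_zeta_of_phi_lower n p q r RR); auto.
  intros y Hy. apply phi_nonincreasing; lra.
- apply (zeta_le_Omega_of_phi_upper n p q r RR); auto.
  intros y Hy. apply phi_nonincreasing; lra.
Qed.
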